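(* Let $V\subset Z^n$ be finite, let $C$ be the cluster of unit cubes in $\mathbb{R}^n$ centered at the points of $V$, and let $\mathcal{M}$ be the lattice generated by $\tfrac12 e_1,e_2,\dots,e_n$. If there is an Abelian group $G$ of order $2|V|$ and a homomorphism $\phi:\mathcal{M}\to G$ such that the restriction of $\phi$ to $W=V\cup(V+\tfrac12 e_1)$ is a bijection onto $G$ and $\phi(e_i)$ is a generator of $G$ for some $i\ge 2$, then there is a non-regular lattice tiling of $\mathbb{R}^n$ by $C$.
   Context: A unit cube centered at $c\in\mathbb{R}^n$ is $c+[-\tfrac12,\tfrac12]^n$. A lattice tiling of $\mathbb{R}^n$ by $C$ is a family $\{C+l;\ l\in\mathcal{L}\}$ with $\mathcal{L}$ a lattice, whose members have pairwise disjoint interiors and cover $\mathbb{R}^n$. Two unit cubes with centers $c,c'$ are neighbors if there is an index $i$ with $|c_i-c_i'|=1$ and $c_j=c_j'$ for all $j\ne i$. A tiling by clusters of cubes is non-regular if it contains two cubes from different tiles whose intersection is $(n-1)$-dimensional but which are not neighbors. *)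

From HB Require Import structures.
From mathcomp Require Import all_boot all_order all_algebra.
From mathcomp Require Import finmap.
From mathcomp Require Import reals.
Set Implicit Arguments. Unset Strict Implicit. Unset Printing Implicit Defensive.
Import Order.TTheory GRing.Theory Num.Theory.
Local Open Scope ring_scope.

Section Defs.
Variables (R : realType) (n : nat).
Implicit Types (x y c l : 'rV[R]_n) (S : 'rV[R]_n -> Prop).

Definition ptZ (v : 'rV[int]_n) : 'rV[R]_n := map_mx (fun k : int => k%:~R) v.

Definition cube c : 'rV[R]_n -> Prop :=
  fun x => forall j : 'I_n, `|x ord0 j - c ord0 j| <= 2^-1.

Definition cluster (V : {fset 'rV[int]_n}) : 'rV[R]_n -> Prop :=
  fun x => exists2 v, v \in V & cube (ptZ v) x.

Definition translate S l : 'rV[R]_n -> Prop := fun x => S (x - l).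

(* topological interior in R^n (sup-norm balls, equivalent to the Euclidean topology) *)
Definition interior S : 'rV[R]_n -> Prop :=
  fun x => exists2 e : R, 0 < e &
    forall y, (forall j : 'I_n, `|y ord0 j - x ord0 j| < e) -> S y.

Definition lattice_gen (B : 'M[R]_n) : 'rV[R]_n -> Prop :=
  fun v => exists z : 'rV[int]_n, v = ptZ z *m B.

Definition is_lattice (L : 'rV[R]_n -> Prop) :=
  exists B : 'M[R]_n, B \in unitmx /\ forall v, L v <-> lattice_gen B v.

Definition lattice_tiling (C L : 'rV[R]_n -> Prop) :=
  [/\ is_lattice L,
      (forall l l', L l -> L l' -> l <> l' ->
          forall x, ~ (interior (translate C l) x /\ interior (translate C l') x))
    & (forall x, exists2 l, L l & translate C l x)].

(* affine dimension of a set S: d = dim span {x - y | x, y in S}, S nonempty *)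
Definition diff_rows S k (A : 'M[R]_(k, n)) :=
  forall i : 'I_k, exists x, exists y, [/\ S x, S y & row i A = x - y].

Definition affdim S (d : nat) :=
  [/\ exists x, S x,
      exists A : 'M[R]_(d, n), diff_rows S A /\ \rank A = d
    & forall k (A : 'M[R]_(k, n)), diff_rows S A -> (\rank A <= d)%N].

Definition neighbors c c' :=
  exists i : 'I_n, `|c ord0 i - c' ord0 i| = 1 /\
    forall j : 'I_n, j != i -> c ord0 j = c' ord0 j.

Definition nonregular (V : {fset 'rV[int]_n}) (L : 'rV[R]_n -> Prop) :=
  exists l, exists l', exists v, exists w,
    [/\ L l, L l', l <> l', v \in V & w \in V] /\
       (affdim (fun x => cube (ptZ v + l) x /\ cube (ptZ w + l') x) n.-1
        /\ ~ neighbors (ptZ v + l) (ptZ w + l')).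

Definition halfe1_basis : 'M[R]_n :=
  \matrix_(i, j) (if i == j then (if val i == 0%N then 2^-1 else 1) else 0).

Definition Mlat : 'rV[R]_n -> Prop := lattice_gen halfe1_basis.

Definition halfe1 : 'rV[R]_n := \row_j (if val j == 0%N then 2^-1 else 0).

Definition Wset (V : {fset 'rV[int]_n}) : 'rV[R]_n -> Prop :=
  fun x => (exists2 v, v \in V & x = ptZ v) \/ (exists2 v, v \in V & x = ptZ v + halfe1).

Definition evec (i : 'I_n) : 'rV[R]_n := delta_mx ord0 i.

End Defs.

Definition generates (G : finZmodType) (g : G) := forall h : G, exists k : int, h = g *~ k.

From HB Require Import structures.
From mathcomp Require Import all_boot all_order all_algebra.
From mathcomp Require Import finmap.
From mathcomp Require Import reals.
From mathcomp Require Import all_fingroup cyclic.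
From mathcomp Require Import ring lra zify.
From Stdlib Require Import Classical.
Set Implicit Arguments. Unset Strict Implicit. Unset Printing Implicit Defensive.
Import Order.TTheory GRing.Theory Num.Theory.
Local Open Scope ring_scope.

(* In the coordinates of the basis 1/2 e_1, e_2, ..., e_n the lattice M is Z^n
   and phi becomes a homomorphism psi : Z^n -> G; the tiling lattice is
   L = ker psi, which has an explicit basis because g = psi(e_i) generates G.
   Every point lies in the cubes centred at two points c, c + 1/2 e_1 of M,
   whose psi-values differ by h = psi(1/2 e_1); as psi maps W bijectively onto
   G, one of them is psi(v) for some v in V, and the point is covered by the
   tile translated by c - v.  If the interiors of two tiles meet, then near a
   point with no half-integral coordinate the two cube centres are points of M
   at distance < 1 in every coordinate, hence equal or 1/2 e_1 apart, and
   injectivity on W forces the tiles to coincide.  Finally, unless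
   psi(w) = psi(v) + g + h for some v, w in V, the set psi(V) is closed under
   adding g, hence under adding h, contradicting injectivity on W; such a pair
   gives a tile cube centred at v + e_i + 1/2 e_1, which meets the cube at v in
   an (n-1)-dimensional piece of a facet without being its neighbour. *)

Section LatticeM.
Variables (R : realType) (n : nat).
Implicit Types (z v : 'rV[int]_n).

Definition mpt z : 'rV[R]_n :=
  \row_j (if val j == 0%N then (z ord0 j)%:~R / 2 else (z ord0 j)%:~R).

Lemma mptE z j :
  mpt z ord0 j = if val j == 0%N then (z ord0 j)%:~R / 2 else (z ord0 j)%:~R.
Proof. by rewrite mxE. Qed.

Lemma mptD z z' : mpt (z + z') = mpt z + mpt z'.
Proof. by apply/rowP => j; rewrite !mxE intrD; case: ifP => _; rewrite ?mulrDl. Qed.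

Lemma mpt0 : mpt 0 = 0.
Proof. by apply/rowP => j; rewrite !mxE; case: ifP; rewrite ?mul0r. Qed.

Lemma mpt_inj : injective mpt.
Proof.
move=> z z' /rowP E; apply/rowP => j; move: (E j); rewrite !mxE.
case: ifP => _ => [/(congr1 ( *%R^~ 2))|]; rewrite /= ?divfK ?pnatr_eq0 //;
  by move/eqP; rewrite eqr_int => /eqP.
Qed.

Lemma halfe1_basis_diag :
  halfe1_basis R n = diag_mx (\row_j (if val j == 0%N then 2^-1 else 1)).
Proof.
apply/matrixP => i j; rewrite !mxE.
by case: (i =P j) => [->|/eqP/negPf ne]; rewrite ?eqxx ?ne ?mulr1n ?mulr0n.
Qed.

Lemma halfe1_basis_unitmx : halfe1_basis R n \in unitmx.
Proof.
rewrite halfe1_basis_diag unitmxE det_diag unitfE prodf_seq_neq0.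
by apply/allP => j _; rewrite mxE; case: ifP; rewrite ?invr_eq0 ?pnatr_eq0 ?oner_eq0.
Qed.

Lemma ptZ_halfe1_basis z : ptZ R z *m halfe1_basis R n = mpt z.
Proof.
rewrite halfe1_basis_diag mul_mx_diag; apply/rowP => j; rewrite !mxE.
by case: ifP; rewrite ?mulr1.
Qed.

Lemma MlatP x : Mlat x <-> exists z, x = mpt z.
Proof. by split => -[z ->]; exists z; rewrite ptZ_halfe1_basis. Qed.

Definition dbl_first v : 'rV[int]_n :=
  \row_j (if val j == 0%N then v ord0 j * 2 else v ord0 j).

Lemma ptZ_mpt v : ptZ R v = mpt (dbl_first v).
Proof.
by apply/rowP => j; rewrite !mxE; case: ifP => j0; rewrite ?j0 ?intrM ?mulfK ?pnatr_eq0.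
Qed.

Definition ez j : 'rV[int]_n := delta_mx ord0 j.

(* This is [ez j] for [val j = 0], but it also makes sense when [n = 0]. *)
Definition ez_first : 'rV[int]_n := \row_j (val j == 0%N)%:R.

Lemma halfe1_mpt : halfe1 R n = mpt ez_first.
Proof. by apply/rowP => j; rewrite !mxE; case: ifP; rewrite ?mul1r. Qed.

Lemma evec_mpt j : val j != 0%N -> evec R j = mpt (ez j).
Proof.
move=> /negPf j0; apply/rowP => k; rewrite !mxE.
by case: (k =P j) => [->|_]; rewrite ?j0 //=; case: ifP; rewrite ?mul0r.
Qed.

End LatticeM.

Section CyclicGroup.
Variables (G : finZmodType) (g : G).

Lemma mulrz_eq0_order (k : int) : (g *~ k == 0) = (#[g]%g %| k)%Z.
Proof.
have orderE m : (g *+ m == 0) = (#[g]%g %| m)%N.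
  by rewrite -FinRing.zmodXgE -FinRing.zmod1gE -order_dvdn.
by case: k => m; rewrite ?NegzE ?mulrNz ?oppr_eq0 ?dvdzE ?abszN -pmulrn orderE.
Qed.

Lemma mulrz_nat (k : int) : exists m : nat, g *~ k = g *+ m.
Proof.
have order_neq0 : (#[g]%g)%:Z != 0 by rewrite -lt0n order_gt0.
have g_order : g *~ #[g]%g = 0 by apply/eqP; rewrite mulrz_eq0_order dvdzz.
have := modz_ge0 k order_neq0; case E: (k %% #[g]%g)%Z => [m|//] _.
exists m.
by rewrite {1}(divz_eq k #[g]%g) E mulrzDr -mulrzA_C g_order mul0rz add0r.
Qed.

Lemma generates_addr_closed (A : G -> Prop) : generates g ->
  (forall a, A a -> A (a + g)) -> forall a b, A a -> A (a + b).
Proof.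
move=> gen Ag a b Aa; have [k ->] := gen b; have [m ->] := mulrz_nat k.
by elim: m => [|m IH]; rewrite ?addr0 // mulrSr addrA; apply: Ag.
Qed.

End CyclicGroup.

Section KernelBasis.
Variables (n : nat) (N : int) (s : 'I_n -> int) (i : 'I_n).
Hypothesis s_i : s i = 1.
Implicit Types (y z : 'rV[int]_n).

Definition wsum z : int := \sum_j z ord0 j * s j.

Lemma wsumE z : wsum z = z ord0 i + \sum_(j | j != i) z ord0 j * s j.
Proof. by rewrite /wsum (bigD1 i) //= s_i mulr1. Qed.

Definition ker_basis : 'M[int]_n := \matrix_(j, k)
  (if k == i then (if j == i then N else - s j) else (j == k)%:R).

Lemma mul_ker_basisE z k : (z *m ker_basis) ord0 k =
  if k == i then z ord0 i * N - \sum_(j | j != i) z ord0 j * s j else z ord0 k.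
Proof.
rewrite !mxE; case: (k =P i) => [->|/eqP/negPf ki].
  rewrite (bigD1 i) //= !mxE !eqxx -sumrN; congr (_ + _).
  by apply: eq_bigr => j /negPf ji; rewrite !mxE eqxx ji mulrN.
rewrite (bigD1 k) //= !mxE ki eqxx mulr1 big1 ?addr0 // => j /negPf jk.
by rewrite !mxE ki jk mulr0.
Qed.

Lemma eq_sum_offi y y' : (forall k, k != i -> y ord0 k = y' ord0 k) ->
  \sum_(j | j != i) y ord0 j * s j = \sum_(j | j != i) y' ord0 j * s j.
Proof. by move=> yy'; apply: eq_bigr => j /yy' ->. Qed.

Lemma wsum_ker_basis z : wsum (z *m ker_basis) = z ord0 i * N.
Proof.
rewrite wsumE mul_ker_basisE eqxx (@eq_sum_offi _ z) ?subrK // => k /negPf ki.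
by rewrite mul_ker_basisE ki.
Qed.

Lemma dvdz_wsumP y : (N %| wsum y)%Z <-> exists z, y = z *m ker_basis.
Proof.
split=> [Ny|[z ->]]; last by rewrite wsum_ker_basis dvdz_mull.
pose z := \row_k (if k == i then (wsum y %/ N)%Z else y ord0 k).
have zy k : k != i -> z ord0 k = y ord0 k by rewrite mxE => /negPf ->.
exists z; apply/rowP => k; rewrite mul_ker_basisE.
case: (k =P i) => [->|/eqP/zy //]; rewrite mxE eqxx divzK // (eq_sum_offi zy).
by rewrite wsumE addrK.
Qed.

Lemma ker_basis_unitmx (F : numFieldType) : N != 0 ->
  map_mx (fun k : int => k%:~R : F) ker_basis \in unitmx.
Proof.
rewrite -(intr_eq0 F) => N0.
pose Q : 'M[F]_n := \matrix_(j, k) (if k == i then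
  (if j == i then N%:~R^-1 else (s j)%:~R / N%:~R) else (j == k)%:R).
suff /mulmx1_unit[] : map_mx (fun k : int => k%:~R : F) ker_basis *m Q = 1%:M by [].
apply/matrixP => j k; rewrite !mxE.
case: (k =P i) => [->|/eqP/negPf ki]; last first.
  rewrite (bigD1 k) //= !mxE ki !eqxx mulr1 big1 ?addr0 => [|m /negPf mk].
    by case: (j == k).
  by rewrite !mxE ki mk mulr0.
rewrite (bigD1 i) //= !mxE !eqxx.
case: (j =P i) => [->|/eqP/negPf ji].
  rewrite big1 ?addr0 ?mulfV // => m /negPf mi.
  by rewrite !mxE mi eq_sym mi mulr0n mul0r.
rewrite (bigD1 j) ?ji //= !mxE ji !eqxx mulr1n mul1r big1 ?addr0.
  by rewrite intrN mulNr addNr.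
move=> m /andP [/negPf mi /negPf mj]; rewrite !mxE mi eq_sym mj.
by rewrite mulr0n mul0r.
Qed.

End KernelBasis.

Lemma raddf_wsum (G : zmodType) n (f : {additive 'rV[int]_n -> G}) (g : G)
    (s : 'I_n -> int) :
  (forall j, f (ez j) = g *~ s j) -> forall z, f z = g *~ wsum s z.
Proof.
move=> fs z; rewrite {1}(row_sum_delta z) raddf_sum /wsum mulrz_sumr.
apply: eq_bigr => j _.
by rewrite -[X in X *: _]intz scaler_int raddfMz fs -mulrzA mulrC.
Qed.

Section Cubes.
Variables (R : realType) (n : nat).
Implicit Types (c l x : 'rV[R]_n).

Lemma cube_translate c l x : translate (cube c) l x <-> cube (c + l) x.
Proof.
have E j : (x - l) ord0 j - c ord0 j = x ord0 j - (c + l) ord0 j.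
  by rewrite !mxE; ring.
by split=> cx j; [rewrite -E | rewrite E]; apply: cx.
Qed.

Lemma not_int_between01 (r : R) : 0 < r < 1 -> r \isn't a Num.int.
Proof.
move=> /andP[r0 r1]; apply/negP => /intrP[k rk].
by move: r0 r1; rewrite rk -(mulr1z 1) ltr0z ltr_int; lia.
Qed.

Lemma near_not_halfint x (e : R) : 0 < e ->
  exists p : 'rV[R]_n, (forall j, `|p ord0 j - x ord0 j| < e) /\
                       (forall j, p ord0 j * 2 \isn't a Num.int).
Proof.
move=> e0; pose r := Num.min e (2^-1) / 2.
have r0 : 0 < r by rewrite divr_gt0 // lt_min e0 invr_gt0 ltr0n.
have [re r_half] : r < e /\ r * 2 < 1.
  have m_e : Num.min e (2^-1) <= e by rewrite ge_min lexx.
  have m_half : Num.min e (2^-1) <= 2^-1 by rewrite ge_min lexx orbT.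
  by rewrite /r; split; lra.
exists (\row_j (if x ord0 j * 2 \is a Num.int then x ord0 j + r else x ord0 j)).
split=> j; rewrite mxE; case: ifP => xj.
- by rewrite addrC addKr gtr0_norm.
- by rewrite subrr normr0.
- have : r * 2 \isn't a Num.int by apply: not_int_between01; apply/andP; split; lra.
  apply: contraNN => xr2.
  have -> : r * 2 = (x ord0 j + r) * 2 - x ord0 j * 2 by ring.
  exact: rpredB.
- by rewrite xj.
Qed.

Lemma mpt_halfint (u : 'rV[int]_n) j : mpt R u ord0 j * 2 \is a Num.int.
Proof.
rewrite mptE; case: ifP => _; last by rewrite rpredM ?intr_int ?natr_int.
by rewrite divfK ?pnatr_eq0 // intr_int.
Qed.

Lemma norm_lt_half (p c : R) : `|p - c| <= 2^-1 -> c * 2 \is a Num.int ->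
  p * 2 \isn't a Num.int -> `|p - c| < 2^-1.
Proof.
move=> pc c2 p2; rewrite lt_neqAle pc andbT; apply: contra p2.
rewrite eqr_norml => /andP[/orP[]/eqP pcE _].
  have -> : p * 2 = c * 2 + 1 by rewrite -(subrK c p) pcE; field.
  by rewrite rpredD ?rpred1.
have -> : p * 2 = c * 2 - 1 by rewrite -(subrK c p) pcE; field.
by rewrite rpredB ?rpred1.
Qed.

Lemma mpt_close (j0 : 'I_n) (u u' : 'rV[int]_n) : val j0 = 0%N ->
  (forall j, `|mpt R u ord0 j - mpt R u' ord0 j| < 1) ->
  [\/ u' = u, u' = u + ez_first n | u = u' + ez_first n].
Proof.
move=> j00 near.
have dist j : `|u ord0 j - u' ord0 j| < if val j == 0%N then 2 else 1.
  have := near j; rewrite !mptE; case: ifP => _ uu'.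
    have : `|(u ord0 j - u' ord0 j)%:~R : R| < 2.
      move: uu'; rewrite -mulrBl -intrB normrM (@gtr0_norm _ 2^-1) ?invr_gt0 //.
      lra.
    by rewrite -intr_norm -[2 : R]/((2 : int)%:~R) ltr_int.
  by move: uu'; rewrite -intrB -intr_norm -[1 : R]/((1 : int)%:~R) ltr_int.
have eq_off0 j : val j != 0%N -> u' ord0 j = u ord0 j.
  by move=> /negPf jn0; move: (dist j); rewrite jn0 ltr_norml; lia.
have at_j0 j : val j = 0%N -> j = j0 by move=> jE; apply: val_inj; rewrite jE.
have : (- 2 < u ord0 j0 - u' ord0 j0 < 2)%R by move: (dist j0); rewrite j00 ltr_norml.
have rowE (w w' : 'rV[int]_n) (d : int) :
    (forall j, val j != 0%N -> w ord0 j = w' ord0 j) ->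
    w ord0 j0 = w' ord0 j0 + d -> w = w' + d *: ez_first n.
  move=> off at0; apply/rowP => j; rewrite !mxE.
  case: (val j =P 0%N) => [jE|/eqP jn0]; first by rewrite (at_j0 _ jE) at0 mulr1.
  by rewrite mulr0 addr0 off.
move=> dist0; have [e|[e|e]] : u ord0 j0 = u' ord0 j0 \/ u' ord0 j0 = u ord0 j0 + 1
  \/ u ord0 j0 = u' ord0 j0 + 1 by lia.
- by apply: Or31; rewrite (@rowE u' u 0) ?scale0r ?addr0 // => [j /eq_off0|]; lia.
- by apply: Or32; rewrite (@rowE u' u 1) ?scale1r // => j /eq_off0.
- by apply: Or33; rewrite (@rowE u u' 1) ?scale1r // => j /eq_off0.
Qed.

End Cubes.

Section Face.
Variables (R : realType) (n : nat) (c : 'rV[R]_n) (i : 'I_n).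
Hypothesis i_neq0 : val i != 0%N.

Definition skew_center : 'rV[R]_n := c + evec R i + halfe1 R n.

Lemma skew_centerE j :
  skew_center ord0 j = c ord0 j + (j == i)%:R + (if val j == 0%N then 2^-1 else 0).
Proof. by rewrite !mxE eqxx. Qed.

Definition face x := cube c x /\ cube skew_center x.

Lemma face_coord_i x : face x -> x ord0 i = c ord0 i + 2^-1.
Proof.
move=> [/(_ i) + /(_ i)]; rewrite skew_centerE eqxx (negPf i_neq0) addr0 mulr1n.
by rewrite !ler_norml => /andP[? ?] /andP[? ?]; lra.
Qed.

Definition face_mid : 'rV[R]_n :=
  \row_j (c ord0 j + (j == i)%:R / 2 + (if val j == 0%N then 4^-1 else 0)).

Lemma face_face_mid : face face_mid.
Proof.
split=> j; rewrite ?skew_centerE mxE ler_norml.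
all: case: (j =P i) => [->|/eqP/negPf ji]; rewrite ?eqxx ?(negPf i_neq0) ?ji /=.
all: rewrite ?mulr1n ?mulr0n ?mul0r ?addr0; try lra.
all: by case: ifP => _; rewrite ?addr0; lra.
Qed.

Lemma face_face_mid_shift j : j != i -> face (face_mid + 4^-1 *: evec R j).
Proof.
move=> /negPf ji; have ij : (i == j) = false by rewrite eq_sym.
split=> k; rewrite ?skew_centerE !mxE ler_norml.
all: case: (k =P i) => [->|/eqP/negPf ki]; rewrite ?eqxx ?(negPf i_neq0) ?ji ?ij ?ki /=.
all: rewrite ?mulr1n ?mulr0n ?mul0r ?mulr0 ?addr0; try lra.
all: case: (k =P j) => [->|/eqP/negPf kj]; rewrite ?eqxx ?kj /= ?mulr1 ?mulr0 ?addr0.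
all: by case: ifP => _; rewrite ?addr0; lra.
Qed.

Definition face_diffs : 'M[R]_(n.-1, n) :=
  \matrix_(k, j) (if j == lift i k then 4^-1 else 0).

Lemma diff_rows_face_diffs : diff_rows face face_diffs.
Proof.
move=> k; exists (face_mid + 4^-1 *: evec R (lift i k)), face_mid; split.
- by apply: face_face_mid_shift; rewrite eq_sym neq_lift.
- exact: face_face_mid.
apply/rowP => j; rewrite !mxE addrC addKr /=.
by case: ifP; rewrite ?mulr1 ?mulr0.
Qed.

Lemma rank_face_diffs : \rank face_diffs = n.-1.
Proof.
apply/eqP; rewrite eqn_leq rank_leq_row /=.
apply: (@mulmx1_min_rank _ _ _ _ _ 16%:M face_diffs^T).
apply/matrixP => k k'; rewrite mul_scalar_mx !mxE (bigD1 (lift i k)) //= !mxE eqxx.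
rewrite big1 ?addr0 => [|j /negPf jk]; last by rewrite !mxE jk mulr0 mul0r.
rewrite (inj_eq (@lift_inj _ i)) eq_sym.
by case: eqP => _; rewrite ?mulr0 ?mulr1n ?mulr0n //; field.
Qed.

Lemma rank_diff_rows_face k (A : 'M[R]_(k, n)) : diff_rows face A -> (\rank A <= n.-1)%N.
Proof.
move=> Aface; pose ei : 'rV[R]_n := delta_mx 0 i.
have Aei : A *m ei^T = 0.
  apply/matrixP => r q; rewrite !mxE (bigD1 i) //= !mxE !eqxx big1 ?addr0.
    have [x [y [fx fy /rowP /(_ i)]]] := Aface r.
    by rewrite !mxE (face_coord_i fx) (face_coord_i fy) subrr => ->; rewrite mul0r.
  by move=> j /negPf ji; rewrite !mxE ji andbF mulr0.
have : (ei <= kermx A^T)%MS.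
  by apply/sub_kermxP; rewrite -(trmxK ei) -trmx_mul Aei trmx0.
by move=> /mxrankS; rewrite mxrank_delta mxrank_ker mxrank_tr; lia.
Qed.

Lemma affdim_face : affdim face n.-1.
Proof.
split; first by exists face_mid; exact: face_face_mid.
  by exists face_diffs; split; [exact: diff_rows_face_diffs | exact: rank_face_diffs].
exact: rank_diff_rows_face.
Qed.

Lemma not_neighbors_skew_center (j0 : 'I_n) : val j0 = 0%N -> ~ neighbors c skew_center.
Proof.
move=> j00 [k [_ off_k]].
have j0i : (j0 == i) = false by apply: contraNF i_neq0 => /eqP <-; rewrite j00.
case: (k =P j0) => [kj0|/eqP kj0].
  have /off_k : i != k by rewrite kj0 eq_sym j0i.
  rewrite skew_centerE eqxx (negPf i_neq0) addr0 => /eqP.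
  by rewrite -subr_eq0 opprD addrA subrr add0r oppr_eq0 oner_eq0.
have /off_k : j0 != k by rewrite eq_sym.
rewrite skew_centerE j00 eqxx j0i addr0 /= => /eqP.
by rewrite -subr_eq0 opprD addrA subrr add0r oppr_eq0 invr_eq0 pnatr_eq0.
Qed.

End Face.

Section Tiling.
Variables (R : realType) (n : nat) (V : {fset 'rV[int]_n}) (G : finZmodType)
  (phi : 'rV[R]_n -> G).
Hypothesis phiD : forall x y, Mlat x -> Mlat y -> phi (x + y) = phi x + phi y.
Hypothesis phi_inj : forall x y, Wset V x -> Wset V y -> phi x = phi y -> x = y.
Hypothesis phi_surj : forall b : G, exists2 x, Wset V x & phi x = b.
Variables (g : G) (s : 'I_n -> int) (i : 'I_n).
Hypothesis s_i : s i = 1.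
Hypothesis i_neq0 : val i != 0%N.

Definition psi z := phi (mpt R z).

Lemma psiD z z' : psi (z + z') = psi z + psi z'.
Proof. by rewrite /psi mptD phiD //; apply/MlatP; eexists. Qed.

Lemma psiB z z' : psi (z - z') = psi z - psi z'.
Proof. by apply/eqP; rewrite eq_sym subr_eq -psiD subrK. Qed.

HB.instance Definition _ := GRing.isZmodMorphism.Build _ _ psi psiB.

Hypothesis psi_ez : forall j, psi (ez j) = g *~ s j.

Lemma psi_eq0 z : (psi z == 0) = (#[g]%g %| wsum s z)%Z.
Proof. by rewrite (raddf_wsum psi_ez) mulrz_eq0_order. Qed.

Definition tiling_basis : 'M[R]_n :=
  map_mx (fun k : int => k%:~R) (ker_basis #[g]%g s i) *m halfe1_basis R n.

Definition tiling_lattice := lattice_gen tiling_basis.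

Lemma tiling_latticeP x : tiling_lattice x <-> exists2 y, psi y = 0 & x = mpt R y.
Proof.
have ptZ_basis z : ptZ R z *m tiling_basis = mpt R (z *m ker_basis #[g]%g s i).
  by rewrite mulmxA -ptZ_halfe1_basis /ptZ map_mxM.
split=> [[z ->]|[y /eqP]].
  rewrite ptZ_basis; eexists => //; apply/eqP; rewrite psi_eq0.
  by apply/(dvdz_wsumP _ s_i); exists z.
by rewrite psi_eq0 => /(dvdz_wsumP _ s_i)[z ->] ->; exists z; rewrite ptZ_basis.
Qed.

Lemma is_lattice_tiling_lattice : is_lattice tiling_lattice.
Proof.
exists tiling_basis; split => //; rewrite unitmx_mul halfe1_basis_unitmx andbT.
by apply: ker_basis_unitmx; rewrite -lt0n order_gt0.
Qed.

Let h := psi (ez_first n).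
Let j0 : 'I_n := Ordinal (leq_ltn_trans (leq0n i) (ltn_ord i)).

Lemma phi_ptZ v : phi (ptZ R v) = psi (dbl_first v).
Proof. by rewrite ptZ_mpt. Qed.

Lemma phi_ptZ_halfe1 v : phi (ptZ R v + halfe1 R n) = psi (dbl_first v) + h.
Proof. by rewrite ptZ_mpt halfe1_mpt -mptD; exact: psiD. Qed.

Lemma psi_dbl_inj v w : v \in V -> w \in V ->
  psi (dbl_first v) = psi (dbl_first w) -> dbl_first v = dbl_first w.
Proof.
move=> Vv Vw E; apply: (@mpt_inj R); rewrite -!ptZ_mpt.
by apply: phi_inj; [left; exists v|left; exists w|rewrite !phi_ptZ].
Qed.

Lemma psi_dbl_neq_addh v w : v \in V -> w \in V ->
  psi (dbl_first w) <> psi (dbl_first v) + h.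
Proof.
move=> Vv Vw E.
have : ptZ R w = ptZ R v + halfe1 R n.
  by apply: phi_inj; [left; exists w|right; exists v|rewrite phi_ptZ phi_ptZ_halfe1].
rewrite !ptZ_mpt halfe1_mpt -mptD => /(@mpt_inj R) /rowP /(_ j0).
by rewrite !mxE /=; lia.
Qed.

Lemma psi_dbl_cover b : exists2 v, v \in V &
  psi (dbl_first v) = b \/ psi (dbl_first v) + h = b.
Proof.
have [x [[v Vv ->]|[v Vv ->]] <-] := phi_surj b; exists v => //.
  by left; rewrite phi_ptZ.
by right; rewrite phi_ptZ_halfe1.
Qed.

Lemma lattice_translate_cluster z v x : v \in V -> psi (dbl_first v) = psi z ->
  cube (mpt R z) x -> exists2 l, tiling_lattice l & translate (cluster V) l x.
Proof.
move=> Vv E zx; exists (mpt R (z - dbl_first v)).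
  by apply/tiling_latticeP; exists (z - dbl_first v); rewrite // psiB E subrr.
by exists v => //; apply/cube_translate; rewrite ptZ_mpt -mptD addrC subrK.
Qed.

Lemma tiling_cover x : exists2 l, tiling_lattice l & translate (cluster V) l x.
Proof.
pose z : 'rV[int]_n := \row_j (if val j == 0%N then Num.floor (x ord0 j * 2)
                                else Num.floor (x ord0 j + 2^-1)).
have zx : cube (mpt R z) x.
  move=> j; rewrite ler_norml !mxE; case: ifP => j_0; rewrite ?j_0.
    by have /andP[] := floor_itv (x ord0 j * 2); rewrite intrD mulr1z; lra.
  by have /andP[] := floor_itv (x ord0 j + 2^-1); rewrite intrD mulr1z; lra.
have z'x : cube (mpt R (z + ez_first n)) x.
  move=> j; rewrite ler_norml !mxE; case: ifP => j_0; rewrite j_0 /=.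
    by have /andP[] := floor_itv (x ord0 j * 2); rewrite !intrD mulr1z; lra.
  by have /andP[] := floor_itv (x ord0 j + 2^-1); rewrite !intrD mulr1z; lra.
have [v Vv [E|E]] := psi_dbl_cover (psi z).
  exact: lattice_translate_cluster Vv E zx.
have [w Vw [E'|E']] := psi_dbl_cover (psi (z + ez_first n)).
  exact: lattice_translate_cluster Vw E' z'x.
by case: (psi_dbl_neq_addh Vv Vw); apply: (addIr h); rewrite E E' psiD.
Qed.

Lemma tiling_disjoint l l' : tiling_lattice l -> tiling_lattice l' -> l <> l' ->
  forall x, ~ (interior (translate (cluster V) l) x /\
               interior (translate (cluster V) l') x).
Proof.
move=> /tiling_latticeP[y y0 ->] /tiling_latticeP[y' y'0 ->] yy' x.
move=> [[e e0 xe] [e' e'0 xe']].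
have ee'0 : 0 < Num.min e e' by rewrite lt_min e0 e'0.
have [p [px p_half]] := near_not_halfint x ee'0.
have [v Vv /cube_translate] : translate (cluster V) (mpt R y) p.
  by apply: xe => j; apply: lt_le_trans (px j) _; rewrite ge_min lexx.
have [w Vw /cube_translate] : translate (cluster V) (mpt R y') p.
  by apply: xe' => j; apply: lt_le_trans (px j) _; rewrite ge_min lexx orbT.
rewrite !ptZ_mpt -!mptD => wp vp.
have near j : `|mpt R (dbl_first v + y) ord0 j - mpt R (dbl_first w + y') ord0 j| < 1.
  have := norm_lt_half (vp j) (mpt_halfint _ _ _) (p_half j).
  have := norm_lt_half (wp j) (mpt_halfint _ _ _) (p_half j).
  by rewrite !ltr_norml => /andP[? ?] /andP[? ?]; lra.
case: (mpt_close (erefl : val j0 = 0%N) near) => E;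
  move: (congr1 psi E); rewrite !psiD y0 y'0 !addr0.
- by move=> /(psi_dbl_inj Vw Vv) wv; apply: yy'; move: E; rewrite wv => /addrI ->.
- exact: psi_dbl_neq_addh.
- exact: psi_dbl_neq_addh.
Qed.

Hypothesis g_gen : generates g.

Lemma exists_skew_pair : exists v w, [/\ v \in V, w \in V &
  psi (dbl_first w) = psi (dbl_first v) + g + h].
Proof.
apply: NNPP => no_pair.
pose A a := exists2 v, v \in V & psi (dbl_first v) = a.
have A_addg a : A a -> A (a + g).
  move=> [v Vv <-]; have [w Vw [E|E]] := psi_dbl_cover (psi (dbl_first v) + g + h).
    by case: no_pair; exists v, w.
  by exists w => //; apply: (addIr h).
have [v Vv _] := psi_dbl_cover 0.
have [w Vw] := generates_addr_closed g_gen A_addg h (ex_intro2 _ _ v Vv erefl).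
exact: psi_dbl_neq_addh.
Qed.

Lemma tiling_nonregular : nonregular V tiling_lattice.
Proof.
have [v [w [Vv Vw E]]] := exists_skew_pair.
pose y := dbl_first v + ez i + ez_first n - dbl_first w.
have y0 : psi y = 0.
  by rewrite /y psiB !psiD psi_ez s_i mulr1z E subrr.
have j0i : (j0 == i) = false by apply: contraNF i_neq0 => /eqP <-.
exists 0, (mpt R y), v, w; split; first split => //.
- by apply/tiling_latticeP; exists 0; rewrite ?raddf0 ?mpt0.
- by apply/tiling_latticeP; exists y.
- move=> /esym; rewrite -(mpt0 R n) => /(@mpt_inj R) /rowP /(_ j0).
  by rewrite !mxE j0i andbF /=; lia.
have -> : ptZ R w + mpt R y = skew_center (ptZ R v + 0) i.
  rewrite /skew_center addr0 (evec_mpt R i_neq0) halfe1_mpt !ptZ_mpt -!mptD.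
  by rewrite /y addrC subrK.
split; first exact: affdim_face.
exact: not_neighbors_skew_center (erefl : val j0 = 0%N).
Qed.

End Tiling.

Theorem theorem4 (R : realType) (n : nat) (V : {fset 'rV[int]_n})
  (G : finZmodType) (phi : 'rV[R]_n -> G)
  (hcard : #|G| = (2 * #|` V|%fset)%N)
  (hhom : forall x y, Mlat x -> Mlat y -> phi (x + y) = phi x + phi y)
  (hinj : forall x y, Wset V x -> Wset V y -> phi x = phi y -> x = y)
  (hsurj : forall g : G, exists2 x, Wset V x & phi x = g)
  (hgen : exists i : 'I_n, (1 <= i)%N /\ generates (phi (evec R i))) :
  exists L : 'rV[R]_n -> Prop, lattice_tiling (cluster (R:=R) V) L /\ nonregular V L.
Proof.
have [i [i_ge1 gen]] := hgen.
have i_neq0 : val i != 0%N by rewrite -lt0n.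
set g := phi (evec R i) in gen.
have psi_ez_ex j : exists k : int, psi phi (ez j) == g *~ k.
  by have [k ->] := gen (psi phi (ez j)); exists k.
pose s j := if j == i then 1 else xchoose (psi_ez_ex j).
have s_i : s i = 1 by rewrite /s eqxx.
have psi_ez j : psi phi (ez j) = g *~ s j.
  rewrite /s; case: eqP => [->|_]; last exact/eqP/(xchooseP (psi_ez_ex j)).
  by rewrite /psi -evec_mpt // mulr1z.
exists (tiling_lattice (R:=R) g s i); split.
  split; first exact: is_lattice_tiling_lattice.
    exact: (tiling_disjoint hhom hinj s_i i_neq0 psi_ez).
  exact: (tiling_cover hhom hinj hsurj s_i i_neq0 psi_ez).
exact: (tiling_nonregular hhom hinj hsurj s_i i_neq0 psi_ez gen).
Qed.
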